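(* Let $S(t)$ be an inverse subordinator, $T>0$, $Z_0>0$, $\sigma>0$. Assume the option is at the money ($K=Z_0$), the interest rate is $r=0$, and the Bachelier volatility is $\sigma^{Ba}=\sigma Z_0$. Let $C^{Ba}_S(T)$ and $C_S(T)$ be the fair prices of the European call option with strike $K$ and expiry $T$ in the subordinated Bachelier model and in the subordinated Black–Scholes model, respectively. Then $$0\le C^{Ba}_S(T)-C_S(T)\le \mathbb{E}\big[S(T)^{3/2}\big]\cdot\frac{Z_0}{12\sqrt{2\pi}}\,\sigma^3 .$$ The same two-sided bound holds for the corresponding European put prices.
   Context: Inverse subordinator: let $\nu$ be a Lévy measure on $(0,\infty)$ with $\int_0^\infty \min(1,x)\,\nu(dx)<\infty$ and $\nu(0,\infty)=\infty$, let $\psi(u)=\int_0^\infty(1-e^{-ux})\,\nu(dx)$, and let $U_\psi$ be the subordinator with $\mathbb{E}e^{-uU_\psi(t)}=e^{-t\psi(u)}$; the inverse subordinator is $S(t)=\inf\{\tau>0: U_\psi(\tau)>t\}$. $B$ is a standard Brownian motion independent of $S$. Subordinated Bachelier model: underlying $Z^{Ba}_S(t)=Z_0+\mu S(t)+\sigma^{Ba}B(S(t))$; subordinated B-S model: underlying $Z_S(t)=Z_0\exp(\mu S(t)+\sigma B(S(t)))$. For $\tau\ge0$, let $C^{Ba}(\tau)$ be the classical Bachelier call price with time to maturity $\tau$ (with $r=0$, $K=Z_0$: $C^{Ba}(\tau)=\sigma^{Ba}\sqrt{\tau}/\sqrt{2\pi}$) and $C(\tau)$ the classical Black–Scholes call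 price (with $r=0$, $K=Z_0$: $C(\tau)=Z_0(2\Phi(\sigma\sqrt\tau/2)-1)$, $\Phi$ the standard normal CDF). The fair prices in the subordinated models are $C^{Ba}_S(T)=\mathbb{E}\,C^{Ba}(S(T))$ and $C_S(T)=\mathbb{E}\,C(S(T))$ (prices under the respective minimal-entropy martingale measures); put prices are defined analogously. *)

From HB Require Import structures.
From mathcomp Require Import all_boot all_order all_algebra.
From mathcomp Require Import all_classical all_reals all_analysis.
Set Implicit Arguments. Unset Strict Implicit. Unset Printing Implicit Defensive.
Import Order.TTheory GRing.Theory Num.Theory.
Import numFieldNormedType.Exports.
Local Open Scope classical_set_scope.
Local Open Scope ring_scope.

Section Defs.
Context (R : realType).

(** Lévy measure on (0,oo) with int min(1,x) nu(dx) < oo and nu(0,oo) = oo,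
    viewed as a Borel measure on R giving no mass to (-oo,0]. *)
Definition levy_measure (nu : {measure set R -> \bar R}) : Prop :=
  [/\ nu [set x : R | x <= 0] = 0%E,
      (\int[nu]_(x in [set x : R | (0 < x)%R]) (Num.min (1%R : R) x)%:E < +oo)%E
    & nu [set x : R | (0 < x)%R] = +oo%E].

Definition laplace_exponent (nu : {measure set R -> \bar R}) (u : R) : \bar R :=
  (\int[nu]_(x in [set x : R | (0 < x)%R]) (1 - expR (- (u * x)))%R%:E)%E.

Context (d : measure_display) (Omega : measurableType d) (P : probability Omega R).

Definition independent_increments (U : R -> Omega -> R) : Prop :=
  forall (n : nat) (s : nat -> R) (A : nat -> set R),
    0 <= s 0%N -> (forall i, s i <= s i.+1) -> (forall i, measurable (A i)) ->
    P (\bigcap_(i in [set k | (k < n)%N]) [set w | A i (U (s i.+1) w - U (s i) w)])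
    = (\prod_(i < n) P [set w | A i (U (s i.+1) w - U (s i) w)%R])%E.

Definition subordinator (nu : {measure set R -> \bar R}) (U : R -> Omega -> R) : Prop :=
  (forall t, measurable_fun setT (U t)) /\
  [/\ (forall w, U 0 w = 0),
      (forall w s t, 0 <= s -> s <= t -> U s w <= U t w),
      (forall w t, 0 <= t -> U s w @[s --> t^'+] --> U t w),
      independent_increments U
    & (forall s t u, 0 <= s -> 0 <= t -> 0 <= u ->
        (\int[P]_w (expR (- (u * (U (s + t) w - U s w))))%:E)%E
        = (expR (- (t * fine (laplace_exponent nu u))))%:E)].

Definition inverse_subordinator (U : R -> Omega -> R) (t : R) (w : Omega) : R :=
  inf [set tau | 0 < tau /\ t < U tau w].

Definition subordinated_price (X : Omega -> R) (C : R -> R) : \bar R :=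
  (\int[P]_w (C (X w))%:E)%E.

End Defs.

Section Pricing.
Context (R : realType).

Definition std_normal_pdf (x : R) : R := normal_pdf 0 1 x.
Definition std_normal_cdf (x : R) : R := fine (normal_prob 0 1 [set y : R | y <= x]).

Definition bachelier_call (Z0 K sigBa tau : R) : R :=
  if tau <= 0 then Num.max (Z0 - K) 0 else
  let dd := (Z0 - K) / (sigBa * Num.sqrt tau) in
  (Z0 - K) * std_normal_cdf dd + sigBa * Num.sqrt tau * std_normal_pdf dd.

Definition bachelier_put (Z0 K sigBa tau : R) : R :=
  if tau <= 0 then Num.max (K - Z0) 0 else
  let dd := (Z0 - K) / (sigBa * Num.sqrt tau) in
  (K - Z0) * std_normal_cdf (- dd) + sigBa * Num.sqrt tau * std_normal_pdf dd.

Definition bs_call (Z0 K sig tau : R) : R :=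
  if tau <= 0 then Num.max (Z0 - K) 0 else
  let d1 := (ln (Z0 / K) + sig ^+ 2 * tau / 2) / (sig * Num.sqrt tau) in
  let d2 := d1 - sig * Num.sqrt tau in
  Z0 * std_normal_cdf d1 - K * std_normal_cdf d2.

Definition bs_put (Z0 K sig tau : R) : R :=
  if tau <= 0 then Num.max (K - Z0) 0 else
  let d1 := (ln (Z0 / K) + sig ^+ 2 * tau / 2) / (sig * Num.sqrt tau) in
  let d2 := d1 - sig * Num.sqrt tau in
  K * std_normal_cdf (- d2) - Z0 * std_normal_cdf (- d1).

End Pricing.

From HB Require Import structures.
From mathcomp Require Import all_boot all_order all_algebra.
From mathcomp Require Import all_classical all_reals all_analysis.
From mathcomp Require Import ring lra measurable_realfun.
Import Order.TTheory GRing.Theory Num.Theory.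
Import numFieldNormedType.Exports.
Local Open Scope classical_set_scope.
Local Open Scope ring_scope.

(* At the money (K = Z0) with r = 0 and sigBa = sigma Z0, both classical
   prices have closed forms in x = sqrt(tau):
     Bachelier:      sigma Z0 x phi(0),
     Black-Scholes:  Z0 (Phi(sigma x / 2) - Phi(- sigma x / 2)).
   Bounding the standard normal density above by its peak phi(0) and below
   by phi(0) (1 - y^2/2) on three subintervals of ]-a, a] gives
     phi(0) (2a - 5a^3/8) <= Phi(a) - Phi(-a) <= 2a phi(0),
   hence, pointwise in tau,
     0 <= Bachelier - Black-Scholes <= Z0 sigma^3 tau^(3/2) / (12 sqrt(2 pi)).
   The subordinated prices are expectations of these functions at the
   random time S(T); integrating the pointwise bounds against P yields the
   theorem, the put case being identical since ATM puts equal ATM calls.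
   The file first shows that the inverse subordinator is measurable (its
   sublevel events are countable combinations of events on U), then
   develops the normal-distribution estimates, the at-the-money closed
   forms and their comparison, and finally the integration step. *)

Section FirstPassage.
Context {R : realType} (f : R -> R) (t : R).
Hypothesis f_nd : forall s s', 0 <= s -> s <= s' -> f s <= f s'.

Let passage := [set tau | 0 < tau /\ t < f tau].

Lemma passage_eq0 : passage = set0 <-> forall n : nat, f n.+1%:R <= t.
Proof.
split=> [E0 n|fle].
  by rewrite leNgt; apply/negP => tf; have : passage n.+1%:R by []; rewrite E0.
apply/seteqP; split => // x [x0 tx]; have := fle (Num.truncn x).
rewrite leNgt => /negP; apply.
exact: lt_le_trans tx (f_nd _ _ (ltW x0) (ltW (truncnS_gt x))).
Qed.

Lemma passage_inf_lt r : passage !=set0 ->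
  inf passage < r <->
  exists n : nat, 0 < r - n.+1%:R^-1 /\ t < f (r - n.+1%:R^-1).
Proof.
move=> nonempty; split=> [infr|[n [c0 tc]]]; last first.
  apply: le_lt_trans (ge_inf _ (conj c0 tc)) _; first by exists 0 => x [/ltW].
  by rewrite ltrBlDr ltrDl invr_gt0 ltr0n.
have [z [z0 tz] zr] := inf_lt nonempty infr.
exists (Num.truncn ((r - z)^-1)).
have rz : 0 < r - z by rewrite subr_gt0.
have m0 : 0 < (Num.truncn ((r - z)^-1)).+1%:R :> R by rewrite ltr0n.
have zle : z <= r - (Num.truncn ((r - z)^-1)).+1%:R^-1.
  rewrite lerBrDl -lerBrDr -[_^-1]mulr1 ler_pdivrMl// -ler_pdivrMr// mul1r.
  exact/ltW/truncnS_gt.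
by split; [exact: lt_le_trans zle | exact: lt_le_trans tz (f_nd _ _ (ltW z0) zle)].
Qed.

Lemma first_passage_lt r :
  inf passage < r <->
  (exists n : nat, 0 < r - n.+1%:R^-1 /\ t < f (r - n.+1%:R^-1)) \/
  ((forall n : nat, f n.+1%:R <= t) /\ 0 < r).
Proof.
have [nonempty|empty] := pselect (passage !=set0).
  rewrite passage_inf_lt//; split=> [|[//|[/passage_eq0 E0 _]]]; first by left.
  by case: nonempty => x; rewrite E0.
have E0 : passage = set0 by apply/seteqP; split => x // Ex; apply: empty; exists x.
rewrite E0 inf0; split=> [r0|[[n [c0 tc]]|[]//]].
  by right; rewrite -passage_eq0.
by case: empty; exists (r - n.+1%:R^-1).
Qed.

End FirstPassage.

Section InverseSubordinatorMeasurable.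
Context {R : realType} {d : measure_display} {Omega : measurableType d}.

Lemma measurable_const_set (Q : Prop) : measurable [set _ : Omega | Q].
Proof.
have [q|nq] := pselect Q.
  by rewrite (_ : [set _ | Q] = setT) //; apply/seteqP; split.
by rewrite (_ : [set _ | Q] = set0) //; apply/seteqP; split.
Qed.

(* The first passage time of a measurable process with nondecreasing paths
   is measurable: {S(t) < r} is a countable union/intersection of events
   {t < U c} and {U c <= t}. *)
Lemma measurable_inverse_subordinator (U : R -> Omega -> R) (t : R) :
  (forall s, measurable_fun setT (U s)) ->
  (forall w s s', 0 <= s -> s <= s' -> U s w <= U s' w) ->
  measurable_fun setT (inverse_subordinator U t).
Proof.
move=> mU monU.
have mUgt c : measurable [set w | t < U c w].
  rewrite (_ : [set w | _] = setT `&` U c @^-1` `]t, +oo[); first exact: mU.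
  by apply/seteqP; split => w /=; rewrite in_itv/= andbT; [split|case].
have mUle c : measurable [set w | U c w <= t].
  rewrite (_ : [set w | _] = setT `&` U c @^-1` `]-oo, t]); first exact: mU.
  by apply/seteqP; split => w /=; rewrite in_itv/=; [split|case].
apply: (measurability (@RGenInftyO.G R)) => [|/= _ [_] [r] -> <-].
  exact: RGenInftyO.measurableE.
rewrite (_ : _ `&` _ = (\bigcup_(n in [set: nat])
    ([set _ | 0 < r - n.+1%:R^-1] `&` [set w | t < U (r - n.+1%:R^-1) w])) `|`
    ((\bigcap_(n in [set: nat]) [set w | U n.+1%:R w <= t]) `&` [set _ | 0 < r])).
  apply: measurableU.
    apply: bigcupT_measurable => n.
    by apply: measurableI; [exact: measurable_const_set | exact: mUgt].
  by apply: measurableI; [exact: bigcapT_measurable | exact: measurable_const_set].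
apply/seteqP; split => w /=.
all: rewrite in_itv /= /inverse_subordinator (first_passage_lt _ _ (monU w)).
  move=> [_ [[n [c0 tc]]|[fle r0]]]; first by left; exists n.
  by right; split => // n _; exact: fle.
move=> [[n _ [c0 tc]]|[fle r0]]; split => //; first by left; exists n.
by right; split => // n; exact: fle.
Qed.

End InverseSubordinatorMeasurable.

Section StandardNormal.
Context {R : realType}.
Local Notation N := (@normal_prob R 0 1).
Local Notation Phi := (@std_normal_cdf R).
Local Notation peak := (@normal_peak R 1).

Lemma peak_gt0 : 0 < peak.
Proof. by rewrite normal_peak_gt0 ?oner_neq0. Qed.

Lemma peakE : peak = (Num.sqrt (2 * pi))^-1.
Proof. by rewrite /normal_peak expr1n mul1r -GRing.mulr_natl. Qed.

Lemma normal_prob_fin_num (A : set R) : measurable A -> N A \is a fin_num.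
Proof.
move=> mA; rewrite ge0_fin_numE ?measure_ge0//.
exact: (le_lt_trans (probability_le1 N mA) (ltry 1)).
Qed.

Lemma std_normal_cdfB u v : u <= v -> Phi v - Phi u = fine (N `]u, v]).
Proof.
move=> uv; have mu : measurable [set y : R | y <= u].
  rewrite (_ : [set y | y <= u] = `]-oo, u]%classic); first exact: measurable_itv.
  by apply/seteqP; split => y /=; rewrite in_itv.
rewrite /std_normal_cdf.
have -> : [set y : R | y <= v] = [set y | y <= u] `|` `]u, v].
  apply/seteqP; split => y /=; rewrite in_itv /=.
    by move=> yv; have [yu|yu] := leP y u; [left|right; apply/andP].
  by move=> [yu|/andP[_ //]]; exact: le_trans uv.
rewrite measureU //; last first.
  apply/seteqP; split => y //= [yu]; rewrite in_itv /= => /andP[uy _].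
  by move: (lt_le_trans uy yu); rewrite ltxx.
by rewrite fineD ?normal_prob_fin_num ?measurable_itv // addrC addKr.
Qed.

Lemma std_normal_cdf_nd : nondecreasing_fun Phi.
Proof.
by move=> x y xy; rewrite -subr_ge0 std_normal_cdfB //; exact: fine_ge0.
Qed.

Lemma measurable_std_normal_cdf : measurable_fun setT Phi.
Proof. exact: nondecreasing_measurable std_normal_cdf_nd. Qed.

Lemma std_normal_pdf0 : std_normal_pdf 0 = peak.
Proof.
rewrite /std_normal_pdf normal_pdfE ?oner_neq0 // /normal_fun.
by rewrite subr0 expr0n /= oppr0 mul0r expR0 mulr1.
Qed.

Lemma std_normal_pdf_ge (x : R) : peak * (1 - x ^+ 2 / 2) <= std_normal_pdf x.
Proof.
rewrite /std_normal_pdf normal_pdfE ?oner_neq0 // ler_pM2l ?peak_gt0 //.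
rewrite /normal_fun; apply: le_trans (expR_ge1Dx _).
by rewrite subr0 expr1n mulr2n; lra.
Qed.

Lemma integral_cst_itv (c u v : R) : u <= v ->
  (\int[lebesgue_measure]_(x in `]u, v]) (cst c%:E x) = (c * (v - u))%:E)%E.
Proof.
move=> uv; rewrite integral_cst //.
rewrite -[X in (_ * X)%E]/(lebesgue_measure (`]u, v]%classic : set R)).
rewrite lebesgue_measure_itv /= lte_fin.
case: ifPn => [_|]; first by rewrite -EFinM.
rewrite -leNgt => vu; have -> : v = u by apply/le_anti/andP.
by rewrite subrr mulr0 mule0.
Qed.

Lemma normal_prob_itv_le (c u v : R) : u <= v ->
  (forall x, u < x <= v -> std_normal_pdf x <= c) ->
  fine (N `]u, v]) <= c * (v - u).
Proof.
move=> uv hc; rewrite -lee_fin fineK ?normal_prob_fin_num ?measurable_itv //.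
rewrite -integral_cst_itv //; apply: ge0_le_integral => //.
  by move=> x _; rewrite lee_fin normal_pdf_ge0.
by apply/measurable_funTS/measurable_EFinP; exact: measurable_normal_pdf.
Qed.

Lemma normal_prob_itv_ge (c u v : R) : u <= v ->
  (forall x, u < x <= v -> c <= std_normal_pdf x) ->
  c * (v - u) <= fine (N `]u, v]).
Proof.
move=> uv hc; have [c0|c0] := ltP c 0.
  by apply: le_trans (fine_ge0 (measure_ge0 _ _)); rewrite nmulr_rle0 // subr_ge0.
rewrite -lee_fin fineK ?normal_prob_fin_num ?measurable_itv //.
rewrite -integral_cst_itv //; apply: ge0_le_integral => //.
by apply/measurable_funTS/measurable_EFinP; exact: measurable_normal_pdf.
Qed.

End StandardNormal.

Section CentralMass.
Context {R : realType}.
Local Notation Phi := (@std_normal_cdf R).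
Local Notation peak := (@normal_peak R 1).

Definition central_mass (a : R) : R := Phi a - Phi (- a).

(* Lower bound on the mass of ]u, v] inside [-m, m], from the Taylor bound
   on the density. *)
Lemma std_normal_cdfB_ge (m u v : R) : u <= v -> - m <= u -> v <= m ->
  peak * (1 - m ^+ 2 / 2) * (v - u) <= Phi v - Phi u.
Proof.
move=> uv mu vm; rewrite std_normal_cdfB //; apply: normal_prob_itv_ge => // x.
move=> /andP[ux xv]; apply: le_trans (std_normal_pdf_ge x).
rewrite ler_pM2l ?peak_gt0 //; nra.
Qed.

Lemma central_mass_ge0 (a : R) : 0 <= a -> 0 <= central_mass a.
Proof.
by move=> a0; rewrite /central_mass std_normal_cdfB ?fine_ge0 //; lra.
Qed.

(* The density is at most its peak. *)
Lemma central_mass_le (a : R) : 0 <= a -> central_mass a <= 2 * a * peak.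
Proof.
move=> a0; rewrite /central_mass std_normal_cdfB; last by lra.
have -> : 2 * a * peak = peak * (a - - a) by ring.
by apply: normal_prob_itv_le => [|x _]; [lra | exact: normal_pdf_ub].
Qed.

(* Splitting ]-a, a] at -a/2 and a/2, with the density bound on each piece. *)
Lemma central_mass_ge (a : R) : 0 <= a ->
  peak * (2 * a - 5 / 8 * a ^+ 3) <= central_mass a.
Proof.
move=> a0; have p0 := @peak_gt0 R.
have outer_r := @std_normal_cdfB_ge a (a / 2) a.
have inner := @std_normal_cdfB_ge (a / 2) (- (a / 2)) (a / 2).
have outer_l := @std_normal_cdfB_ge a (- a) (- (a / 2)).
rewrite /central_mass.
have -> : Phi a - Phi (- a) = (Phi a - Phi (a / 2)) +
    (Phi (a / 2) - Phi (- (a / 2))) + (Phi (- (a / 2)) - Phi (- a)) by ring.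
by apply: le_trans (lerD (lerD (outer_r _ _ _) (inner _ _ _)) (outer_l _ _ _)); lra.
Qed.

End CentralMass.

Section AtTheMoney.
Context {R : realType}.
Local Notation peak := (@normal_peak R 1).

Definition bachelier_atm (sigBa tau : R) : R := sigBa * Num.sqrt tau * peak.

Definition bs_atm (Z0 sig tau : R) : R :=
  Z0 * central_mass (sig * Num.sqrt tau / 2).

Definition atm_gap_coef (Z0 sig : R) : R := Z0 / (12 * Num.sqrt (2 * pi)) * sig ^+ 3.

Definition atm_gap_bound (Z0 sig tau : R) : R := tau `^ (3 / 2) * atm_gap_coef Z0 sig.

Lemma bachelier_call_atm (Z0 sigBa tau : R) :
  bachelier_call Z0 Z0 sigBa tau = bachelier_atm sigBa tau.
Proof.
rewrite /bachelier_call /bachelier_atm subrr mul0r add0r; case: ifPn => [t0|_].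
  by rewrite ler0_sqrtr // mulr0 mul0r maxxx.
by rewrite mul0r std_normal_pdf0.
Qed.

Lemma bachelier_put_atm (Z0 sigBa tau : R) :
  bachelier_put Z0 Z0 sigBa tau = bachelier_atm sigBa tau.
Proof.
rewrite /bachelier_put /bachelier_atm subrr mul0r add0r; case: ifPn => [t0|_].
  by rewrite ler0_sqrtr // mulr0 mul0r maxxx.
by rewrite mul0r std_normal_pdf0.
Qed.

Lemma bs_d1_atm (Z0 sig tau : R) : 0 < Z0 -> 0 < sig -> 0 < tau ->
  (ln (Z0 / Z0) + sig ^+ 2 * tau / 2) / (sig * Num.sqrt tau) =
  sig * Num.sqrt tau / 2.
Proof.
move=> z0 s0 t0; rewrite divff ?gt_eqF // ln1 add0r.
have st : 0 < Num.sqrt tau by rewrite sqrtr_gt0.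
by rewrite -{1}(sqr_sqrtr (ltW t0)); field; rewrite !gt_eqF.
Qed.

Lemma bs_d2_atm (sig tau : R) :
  sig * Num.sqrt tau / 2 - sig * Num.sqrt tau = - (sig * Num.sqrt tau / 2).
Proof. by field. Qed.

Lemma bs_call_atm (Z0 sig tau : R) : 0 < Z0 -> 0 < sig ->
  bs_call Z0 Z0 sig tau = bs_atm Z0 sig tau.
Proof.
move=> z0 s0; rewrite /bs_call /bs_atm /central_mass; case: ifPn => [t0|].
  by rewrite ler0_sqrtr // subrr maxxx (mulr0 sig) mul0r oppr0 subrr mulr0.
by rewrite -ltNge => t0; rewrite bs_d1_atm // bs_d2_atm mulrBr.
Qed.

Lemma bs_put_atm (Z0 sig tau : R) : 0 < Z0 -> 0 < sig ->
  bs_put Z0 Z0 sig tau = bs_atm Z0 sig tau.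
Proof.
move=> z0 s0; rewrite /bs_put /bs_atm /central_mass; case: ifPn => [t0|].
  by rewrite ler0_sqrtr // subrr maxxx (mulr0 sig) mul0r oppr0 subrr mulr0.
by rewrite -ltNge => t0; rewrite bs_d1_atm // bs_d2_atm opprK mulrBr.
Qed.

Section Comparison.
Context {Z0 sig : R}.
Hypotheses (Z0_gt0 : 0 < Z0) (sig_gt0 : 0 < sig).

Let half_vol_ge0 (tau : R) : 0 <= sig * Num.sqrt tau / 2.
Proof. by rewrite divr_ge0 // mulr_ge0 ?sqrtr_ge0 // ltW. Qed.

Lemma bs_atm_ge0 (tau : R) : 0 <= bs_atm Z0 sig tau.
Proof. by rewrite mulr_ge0 ?central_mass_ge0 // ltW. Qed.

Lemma atm_gap_coef_ge0 : 0 <= atm_gap_coef Z0 sig.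
Proof.
apply: mulr_ge0; last exact/exprn_ge0/ltW.
by apply: divr_ge0; [exact: ltW | rewrite mulr_ge0 ?sqrtr_ge0].
Qed.

Lemma atm_gap_bound_ge0 (tau : R) : 0 <= atm_gap_bound Z0 sig tau.
Proof. by rewrite mulr_ge0 ?powR_ge0 ?atm_gap_coef_ge0. Qed.

Lemma bs_atm_le_bachelier_atm (tau : R) :
  bs_atm Z0 sig tau <= bachelier_atm (sig * Z0) tau.
Proof.
rewrite /bs_atm /bachelier_atm.
by apply: le_trans (ler_wpM2l (ltW Z0_gt0) (central_mass_le _ (half_vol_ge0 tau))) _; lra.
Qed.

Lemma bachelier_atm_le (tau : R) :
  bachelier_atm (sig * Z0) tau <= bs_atm Z0 sig tau + atm_gap_bound Z0 sig tau.
Proof.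
have [t0|t0] := leP tau 0.
  rewrite /bachelier_atm ler0_sqrtr // mulr0 mul0r.
  by rewrite addr_ge0 ?bs_atm_ge0 ?atm_gap_bound_ge0.
rewrite /bachelier_atm /bs_atm /atm_gap_bound /atm_gap_coef.
set x := Num.sqrt tau; have x0 : 0 <= x by rewrite sqrtr_ge0.
have -> : tau `^ (3 / 2) = x ^+ 3.
  rewrite (_ : 3 / 2 = 2^-1 * 3%:R); last by rewrite mulrC.
  by rewrite powRrM powR12_sqrt ?ltW // powR_mulrn.
have -> : Z0 / (12 * Num.sqrt (2 * pi)) = Z0 / 12 * peak.
  by rewrite peakE invfM mulrA.
have mass := ler_wpM2l (ltW Z0_gt0) (central_mass_ge _ (half_vol_ge0 tau)).
have k : 0 <= Z0 * peak * sig ^+ 3 * x ^+ 3.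
  apply: mulr_ge0; last exact: exprn_ge0.
  apply: mulr_ge0; last exact/exprn_ge0/ltW.
  by apply: mulr_ge0; [exact: ltW | exact/ltW/peak_gt0].
rewrite -/x in mass; nra.
Qed.

Lemma bachelier_atm_sandwich (tau : R) :
  bs_atm Z0 sig tau <= bachelier_atm (sig * Z0) tau <=
  bs_atm Z0 sig tau + atm_gap_bound Z0 sig tau.
Proof. by rewrite bs_atm_le_bachelier_atm bachelier_atm_le. Qed.

End Comparison.

Lemma measurable_sqrt : measurable_fun setT (@Num.sqrt R).
Proof. by apply: nondecreasing_measurable => // x y; exact: ler_wsqrtr. Qed.

Lemma measurable_bachelier_atm (sigBa : R) :
  measurable_fun setT (bachelier_atm sigBa).
Proof.
by apply: measurable_funM => //; apply: measurable_funM => //; exact: measurable_sqrt.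
Qed.

Lemma measurable_bs_atm (Z0 sig : R) : measurable_fun setT (bs_atm Z0 sig).
Proof.
have mhalf : measurable_fun setT (fun tau : R => sig * Num.sqrt tau / 2).
  by apply: measurable_funM => //; apply: measurable_funM => //; exact: measurable_sqrt.
apply: measurable_funM => //; apply: measurable_funB.
  exact: measurableT_comp measurable_std_normal_cdf mhalf.
exact: measurableT_comp measurable_std_normal_cdf (measurable_funN mhalf).
Qed.

Lemma measurable_atm_gap_bound (Z0 sig : R) :
  measurable_fun setT (atm_gap_bound Z0 sig).
Proof. by apply: measurable_funM => //; exact: measurable_powR. Qed.

End AtTheMoney.

Section IntegralSandwich.
Context {d : measure_display} {T : measurableType d} {R : realType}.
Variable mu : {measure set T -> \bar R}.

Lemma integral_sandwich (g f h : T -> R) :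
  measurable_fun setT g -> measurable_fun setT f -> measurable_fun setT h ->
  (forall x, 0 <= g x) -> (forall x, 0 <= h x) ->
  (forall x, g x <= f x <= g x + h x) ->
  (\int[mu]_x (g x)%:E <= \int[mu]_x (f x)%:E <=
   \int[mu]_x (g x)%:E + \int[mu]_x (h x)%:E)%E.
Proof.
move=> /measurable_EFinP mg /measurable_EFinP mf /measurable_EFinP mh g0 h0 gfh.
have f0 x : 0 <= f x by apply: le_trans (g0 x) _; case/andP: (gfh x).
apply/andP; split.
  apply: ge0_le_integral => //; first by move=> x _; rewrite lee_fin.
  by move=> x _; rewrite lee_fin; case/andP: (gfh x).
rewrite -ge0_integralD // => [|x _|x _]; try by rewrite lee_fin.
apply: ge0_le_integral => //; first by move=> x _; rewrite lee_fin.
  exact: emeasurable_funD.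
by move=> x _; rewrite -EFinD lee_fin; case/andP: (gfh x).
Qed.

End IntegralSandwich.

Theorem theorem1 (R : realType) (d : measure_display) (Omega : measurableType d)
  (P : probability Omega R) (nu : {measure set R -> \bar R}) (U : R -> Omega -> R)
  (T Z0 sigma : R) :
  levy_measure nu -> subordinator P nu U ->
  0 < T -> 0 < Z0 -> 0 < sigma ->
  let S := inverse_subordinator U in
  let K := Z0 in
  let sigBa := sigma * Z0 in
  let bound := (\int[P]_w ((S T w) `^ (3 / 2))%:E
                * (Z0 / (12 * Num.sqrt (2 * pi)) * sigma ^+ 3)%:E)%E in
  let CBa := subordinated_price P (S T) (bachelier_call Z0 K sigBa) in
  let C := subordinated_price P (S T) (bs_call Z0 K sigma) in
  let PBa := subordinated_price P (S T) (bachelier_put Z0 K sigBa) in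
  let Pt := subordinated_price P (S T) (bs_put Z0 K sigma) in
  ((C <= CBa)%E /\ (CBa <= C + bound)%E) /\
  ((Pt <= PBa)%E /\ (PBa <= Pt + bound)%E).
Proof.
move=> _ [mU [_ monU _ _ _]] _ Z0_gt0 sig_gt0 S K sigBa bound CBa C PBa Pt.
have mS : measurable_fun setT (S T) := measurable_inverse_subordinator U T mU monU.
have eCBa : CBa = (\int[P]_w (bachelier_atm sigBa (S T w))%:E)%E.
  by apply: eq_integral => w _; rewrite bachelier_call_atm.
(* At the money, puts and calls have the same price in both models. *)
have ePBa : PBa = CBa.
  by apply: eq_integral => w _; rewrite bachelier_put_atm bachelier_call_atm.
have eC : C = (\int[P]_w (bs_atm Z0 sigma (S T w))%:E)%E.
  by apply: eq_integral => w _; rewrite bs_call_atm.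
have ePt : Pt = C.
  by apply: eq_integral => w _; rewrite bs_put_atm // bs_call_atm.
have eb : bound = (\int[P]_w (atm_gap_bound Z0 sigma (S T w))%:E)%E.
  rewrite /bound -ge0_integralZr //; last by rewrite lee_fin atm_gap_coef_ge0.
    by apply/measurable_EFinP; exact: measurableT_comp (measurable_powR _) mS.
  by move=> w _; rewrite lee_fin powR_ge0.
have := integral_sandwich P _ _ _
  (measurableT_comp (measurable_bs_atm Z0 sigma) mS)
  (measurableT_comp (measurable_bachelier_atm sigBa) mS)
  (measurableT_comp (measurable_atm_gap_bound Z0 sigma) mS)
  (fun w => bs_atm_ge0 Z0_gt0 sig_gt0 (S T w))
  (fun w => atm_gap_bound_ge0 Z0_gt0 sig_gt0 (S T w))
  (fun w => bachelier_atm_sandwich Z0_gt0 sig_gt0 (S T w)).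
by rewrite ePBa ePt eCBa eC eb => /andP[].
Qed.
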